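(* Consider a rule of the PJR-Exact family run on $(\mathcal{A},k)$, and fix $j$ with $0\le j\le k-1$ such that iterations $1,\dots,j$ are all normal (for $j=0$ this is vacuous). If some candidate $c_1\in C\setminus W_j$ is in an eager state after $j$ iterations, then there exists a candidate $c_2\in C\setminus W_j$ that is in a normal state after $j$ iterations.
   Context: Setting: voters $N=\{1,\dots,n\}$, candidates $C=\{c_1,\dots,c_m\}$, approval ballots $A_i\subseteq C$, $\mathcal{A}=(A_1,\dots,A_n)$, $k$ a positive integer with $k\le|C|$, $q=n/k$, $N_c=\{i: c\in A_i\}$. Convention: $\max\emptyset=0$. Dissatisfaction level: for $W\subseteq C$ with $|W|\le k$ and $c\in C\setminus W$, $\ell(c,W)$ is the largest nonnegative integer $\ell$ with $\ell=\lfloor \frac{k}{n}|\{i\in N: c\in A_i,\ |A_i\cap W|<\ell\}|\rfloor$. PJR-Exact family: iterative procedures selecting $w_1,\dots,w_k$, $W_0=\emptyset$, $W_j=W_{j-1}\cup\{w_j\}$, $w_j\notin W_{j-1}$, with vote fractions $f_i^0=1$, $0\le f_i^j\le f_i^{j-1}$, such that at each iteration $j$: (a) $f_i^j=f_i^{j-1}$ for $i\notin N_{w_j}$; (b) with $s=\sum_{i\in N_{w_j}}f_i^{j-1}$, if $s>q$ then $\sum_{i\in N_{w_j}}(f_i^{j-1}-f_i^j)=q$, and if $s\le q$ then $f_i^j=0$ for all $i\in N_{w_j}$; (c) if some $c\in C\setminus W_{j-1}$ has $\sum_{i\in N_c}f_i^{j-1}\ge q$ then $\sum_{i\in N_{w_j}}f_i^{j-1}\ge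 q$. Notation along a run: $\ell_j(c)=\ell(c,W_j)$ for $c\in C\setminus W_j$; for $c\in C\setminus W_j$ and $i\in N_c$, $\ell_j(i,c)=\max_{c'\in A_i\setminus(W_j\cup\{c\})}\ell_j(c')$; $g_i^j(c)=0$ if $\ell_j(i,c)\le|A_i\cap W_j|$ and $g_i^j(c)=\frac{\ell_j(i,c)-|A_i\cap W_j|-1}{\ell_j(i,c)}$ otherwise. States of $c\in C\setminus W_j$ after $j$ iterations: normal if (1) for each $i\in N_c$ with $\ell_j(i,c)>|A_i\cap W_j|$ we have $f_i^j\ge\frac{\ell_j(i,c)-|A_i\cap W_j|}{\ell_j(i,c)}$, and (2) $\sum_{i\in N_c}(f_i^j-g_i^j(c))\ge q$; starving if (1) fails; eager if not starving, $\sum_{i\in N_c}f_i^j\ge q$ and $\sum_{i\in N_c}(f_i^j-g_i^j(c))<q$; insufficiently supported if not starving and $\sum_{i\in N_c}f_i^j<q$. Normal iteration: iteration $j$ ($1\le j\le k$) is normal if $w_j$ is in normal state after $j-1$ iterations and, for each $i\in N_{w_j}$ with $\ell_{j-1}(i,w_j)>|A_i\cap W_{j-1}|$, $f_i^j\ge\frac{\ell_{j-1}(i,w_j)-|A_i\cap W_j|}{\ell_{j-1}(i,w_j)}$. *)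

From HB Require Import structures.
From mathcomp Require Import all_boot all_order all_algebra.
Set Implicit Arguments. Unset Strict Implicit. Unset Printing Implicit Defensive.
Import Order.TTheory GRing.Theory Num.Theory.

Section PJR.
Variables (n : nat) (C : finType) (A : 'I_n -> {set C}) (k : nat).

Definition Nc (c : C) : {set 'I_n} := [set i | c \in A i].

Definition quota : rat := (n%:R / k%:R)%R.

Definition dcount (W : {set C}) (c : C) (l : nat) : nat :=
  #|[set i | (c \in A i) && (#|A i :&: W| < l)]|.

Definition dfix (W : {set C}) (c : C) (l : nat) : bool :=
  l == (k * dcount W c l) %/ n.

(* Dissatisfaction level: the largest l with dfix W c l.  Every solution is
   at most k (as dcount <= n), and l = 0 is always a solution, so the max over
   l <= k is the largest solution. *)
Definition dlevel (W : {set C}) (c : C) : nat :=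
  \max_(l < k.+1 | dfix W c l) (l : nat).

(* Run data: w j is the j-th selected candidate (j = 1..k),
   f j i is f_i^j. *)
Variables (w : nat -> C) (f : nat -> 'I_n -> rat).

Definition Wset (j : nat) : {set C} := [set w (nat_of_ord t).+1 | t : 'I_j].

Definition lvl (j : nat) (c : C) : nat := dlevel (Wset j) c.

(* ell_j(i,c) = max_{c' in A_i \ (W_j ∪ {c})} ell_j(c'), max of empty = 0 *)
Definition lvl_i (j : nat) (i : 'I_n) (c : C) : nat :=
  \max_(c' in A i :\: (Wset j :|: [set c])) lvl j c'.

Definition sat (j : nat) (i : 'I_n) : nat := #|A i :&: Wset j|.

Definition gfun (j : nat) (i : 'I_n) (c : C) : rat :=
  if lvl_i j i c <= sat j i then 0%R
  else (((lvl_i j i c)%:R - (sat j i)%:R - 1) / (lvl_i j i c)%:R)%R.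

Definition cond1 (j : nat) (c : C) : Prop :=
  forall i : 'I_n, i \in Nc c -> sat j i < lvl_i j i c ->
    ((((lvl_i j i c)%:R - (sat j i)%:R) / (lvl_i j i c)%:R) <= f j i)%R.

Definition normal_state (j : nat) (c : C) : Prop :=
  cond1 j c /\ (quota <= \sum_(i in Nc c) (f j i - gfun j i c))%R.

Definition starving_state (j : nat) (c : C) : Prop := ~ cond1 j c.

Definition eager_state (j : nat) (c : C) : Prop :=
  cond1 j c /\ (quota <= \sum_(i in Nc c) f j i)%R /\
  (\sum_(i in Nc c) (f j i - gfun j i c) < quota)%R.

Definition insuff_state (j : nat) (c : C) : Prop :=
  cond1 j c /\ (\sum_(i in Nc c) f j i < quota)%R.

Definition normal_iteration (j : nat) : Prop :=
  normal_state j.-1 (w j) /\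
  forall i : 'I_n, i \in Nc (w j) -> sat j.-1 i < lvl_i j.-1 i (w j) ->
    ((((lvl_i j.-1 i (w j))%:R - (sat j i)%:R) / (lvl_i j.-1 i (w j))%:R)
       <= f j i)%R.

Definition PJR_exact_run : Prop :=
  (forall i, f 0 i = 1%R) /\
  forall j, 1 <= j <= k ->
    [/\ w j \notin Wset j.-1,
        (forall i, (0 <= f j i)%R /\ (f j i <= f j.-1 i)%R),
        (forall i, i \notin Nc (w j) -> f j i = f j.-1 i),
        ((quota < \sum_(i in Nc (w j)) f j.-1 i)%R ->
           (\sum_(i in Nc (w j)) (f j.-1 i - f j i))%R = quota) /\
        (((\sum_(i in Nc (w j)) f j.-1 i)%R <= quota)%R ->
           forall i, i \in Nc (w j) -> f j i = 0%R)
      & (exists c, c \notin Wset j.-1 /\ (quota <= \sum_(i in Nc c) f j.-1 i)%R) ->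
           (quota <= \sum_(i in Nc (w j)) f j.-1 i)%R].

End PJR.

From HB Require Import structures.
From mathcomp Require Import all_boot all_order all_algebra.
From mathcomp Require Import lra zify.
Import Order.TTheory GRing.Theory Num.Theory.
Set Implicit Arguments. Unset Strict Implicit. Unset Printing Implicit Defensive.

(* Let [c*] be an unselected candidate of maximal level [L = lvl j c*]; the
   eager candidate only serves to show [L > 0].  By induction along the normal
   iterations, a voter approving an unselected candidate [c] keeps at least
   [(l - |A_i :&: W_t|) / l] of its vote whenever [l] satisfies the fixed-point
   inequality [l <= floor (k/n * dcount W_t c l)]: when [w_(t+1)] is approved
   by the voter, this is the second clause of normality of iteration [t+1],
   since [l <= lvl t c <= lvl_i t i (w_(t+1))].  Applied to [c*] with [l = L]
   this gives condition (1), as every [lvl_i j i c*] is at most [L], and shows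
   that each of the at least [L n / k] voters of [c*] with fewer than [L]
   representatives contributes at least [1/L] to [\sum (f - g)]. *)

Definition reserve (l s : nat) : rat := ((l%:R - s%:R) / l%:R)%R.

Section Reserve.
Local Open Scope ring_scope.
Implicit Types l s : nat.

Lemma reserve_le1 l s : (0 < l)%N -> reserve l s <= 1.
Proof.
move=> l_gt0; have l_pos : 0 < l%:R :> rat by rewrite ltr0n.
by rewrite /reserve ler_pdivrMr // mul1r gerBl ler0n.
Qed.

Lemma reserve_homo s l l' : (0 < l)%N -> (l <= l')%N ->
  reserve l s <= reserve l' s.
Proof.
move=> l_gt0 le_ll'.
have l_pos : 0 < l%:R :> rat by rewrite ltr0n.
have l'_pos : 0 < l'%:R :> rat by rewrite ltr0n (leq_trans l_gt0).
have : l%:R <= l'%:R :> rat by rewrite ler_nat.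
have : 0 <= s%:R :> rat by rewrite ler0n.
rewrite /reserve ler_pdivrMr // mulrAC ler_pdivlMr //; nra.
Qed.

Lemma invn_le_reserve l s : (s < l)%N -> l%:R^-1 <= reserve l s.
Proof.
move=> lt_sl; have l_pos : 0 < l%:R :> rat by rewrite ltr0n (leq_ltn_trans _ lt_sl).
have : s%:R + 1 <= l%:R :> rat by rewrite natr1 ler_nat.
rewrite /reserve ler_pdivlMr // mulVf ?gt_eqF //; lra.
Qed.

(* [reserve l' s - l'^-1] is the value [(l' - s - 1) / l'] of [gfun]. *)
Lemma invn_le_reserve_sub_gap l l' s : (s < l')%N -> (l' <= l)%N ->
  l%:R^-1 <= reserve l s - (reserve l' s - l'%:R^-1).
Proof.
move=> lt_sl' le_l'l; have l'_gt0 : (0 < l')%N by apply: leq_ltn_trans lt_sl'.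
have := reserve_homo s l'_gt0 le_l'l.
have : l%:R^-1 <= l'%:R^-1 :> rat.
  by rewrite lef_pV2 ?ler_nat ?posrE ?ltr0n // (leq_trans l'_gt0).
lra.
Qed.

Lemma quota_le_ratio n k l d : (0 < n)%N -> (0 < l)%N -> (l <= k * d %/ n)%N ->
  quota n k <= d%:R / l%:R.
Proof.
move=> n_gt0 l_gt0; rewrite leq_divRL // => le_ln_kd.
have k_gt0 : (0 < k)%N by nia.
rewrite /quota ler_pdivrMr ?ltr0n // mulrAC ler_pdivlMr ?ltr0n //.
by rewrite -!natrM ler_nat; nia.
Qed.

End Reserve.

Section DissatisfactionLevel.
Variables (n : nat) (C : finType) (A : 'I_n -> {set C}) (k : nat).
Hypothesis n_gt0 : 0 < n.
Implicit Types (W : {set C}) (c : C) (l : nat).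

Definition dbound W c l := k * dcount A W c l %/ n.

Lemma dcount_le W c l : dcount A W c l <= n.
Proof. by rewrite /dcount (leq_trans (max_card _)) // card_ord. Qed.

Lemma subset_dcount W W' c l : W \subset W' -> dcount A W' c l <= dcount A W c l.
Proof.
move=> sWW'; apply/subset_leq_card/subsetP => i; rewrite !inE => /andP[-> lt_l] /=.
exact/(leq_ltn_trans _ lt_l)/subset_leq_card/setIS.
Qed.

Lemma leq_dcount W c l l' : l <= l' -> dcount A W c l <= dcount A W c l'.
Proof.
move=> le_ll'; apply/subset_leq_card/subsetP => i; rewrite !inE => /andP[-> lt_l] /=.
exact: leq_trans lt_l le_ll'.
Qed.

Lemma subset_dbound W W' c l : W \subset W' -> dbound W' c l <= dbound W c l.
Proof. by move=> sWW'; rewrite leq_div2r // leq_mul2l subset_dcount ?orbT. Qed.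

Lemma leq_dbound W c l l' : l <= l' -> dbound W c l <= dbound W c l'.
Proof. by move=> le_ll'; rewrite leq_div2r // leq_mul2l leq_dcount ?orbT. Qed.

Lemma dbound_le W c l : dbound W c l <= k.
Proof.
by rewrite /dbound (leq_trans (leq_div2r n (leq_mul (leqnn k) (dcount_le W c l)))) ?mulnK.
Qed.

Lemma dlevel_le_dbound W c : dlevel A k W c <= dbound W c (dlevel A k W c).
Proof.
rewrite /dlevel; apply: (big_ind (fun x => x <= dbound W c x)) => //; last first.
  by move=> l /eqP {1}->.
move=> x y lex ley.
rewrite geq_max (leq_trans lex) ?(leq_trans ley) ?leq_dbound ?leq_maxl ?leq_maxr //.
Qed.

(* The largest post-fixed point of the monotone map [dbound W c] on [0, k] is
   a fixed point, hence below the largest fixed point [dlevel]. *)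
Lemma le_dlevel W c l : l <= dbound W c l -> l <= dlevel A k W c.
Proof.
move=> le_l_dbound; have lt_lk : l < k.+1 by rewrite ltnS (leq_trans le_l_dbound) ?dbound_le.
have [m le_m_dbound m_max] :=
  @arg_maxnP _ (Ordinal lt_lk) (fun x : 'I_k.+1 => x <= dbound W c x) val le_l_dbound.
have lt_dbound_k : dbound W c m < k.+1 by rewrite ltnS dbound_le.
have m_fix : dfix A k W c m.
  rewrite /dfix eqn_leq le_m_dbound /=.
  by have := m_max (Ordinal lt_dbound_k) (leq_dbound _ _ le_m_dbound).
exact: leq_trans (m_max (Ordinal lt_lk) le_l_dbound) (leq_bigmax_cond _ m_fix).
Qed.

End DissatisfactionLevel.

Section Selection.
Variables (n : nat) (C : finType) (A : 'I_n -> {set C}) (w : nat -> C).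

Lemma subset_Wset t t' : t <= t' -> Wset w t \subset Wset w t'.
Proof.
move=> le_tt'; apply/subsetP => _ /imsetP[s _ ->].
by apply/imsetP; exists (widen_ord le_tt' s).
Qed.

Lemma WsetS t : Wset w t.+1 = w t.+1 |: Wset w t.
Proof.
apply/setP => x; rewrite in_setU1; apply/idP/idP => [/imsetP[s _ ->]|].
  have [lt_st|] := ltnP s t; first by apply/orP; right; apply/imsetP; exists (Ordinal lt_st).
  move=> le_ts; rewrite (_ : nat_of_ord s = t) ?eqxx //.
  by apply/eqP; rewrite eqn_leq le_ts -ltnS ltn_ord.
case/orP => [/eqP ->|]; first by apply/imsetP; exists ord_max.
exact/subsetP/subset_Wset.
Qed.

Lemma leq_sat t t' i : t <= t' -> sat A w t i <= sat A w t' i.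
Proof. by move=> le_tt'; apply/subset_leq_card/setIS/subset_Wset. Qed.

Lemma satS_notin t i : w t.+1 \notin A i -> sat A w t.+1 i = sat A w t i.
Proof.
move=> wA; rewrite /sat WsetS setIUr (_ : A i :&: [set w t.+1] = set0) ?set0U //.
by apply/setP => x; rewrite !inE andbC; case: eqP => // ->; apply: negbTE.
Qed.

End Selection.

Section Levels.
Variables (n : nat) (C : finType) (A : 'I_n -> {set C}) (k : nat).
Variables (w : nat -> C) (f : nat -> 'I_n -> rat).

Lemma lvl_le_lvl_i j i c c' : c' \in A i -> c' \notin Wset w j -> c' != c ->
  lvl A k w j c' <= lvl_i A k w j i c.
Proof. by move=> c'A c'W c'c; apply: leq_bigmax_cond; rewrite !inE c'A andbT negb_or c'W. Qed.

Lemma lvl_i_le j i c m : (forall c', c' \notin Wset w j -> lvl A k w j c' <= m) ->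
  lvl_i A k w j i c <= m.
Proof.
move=> le_m; apply/bigmax_leqP => c'.
by rewrite !inE negb_or => /andP[/andP[c'W _] _]; apply: le_m.
Qed.

Lemma gfun_inactive j i c : lvl_i A k w j i c <= sat A w j i -> gfun A k w j i c = 0%R.
Proof. by rewrite /gfun => ->. Qed.

Lemma gfun_active j i c : sat A w j i < lvl_i A k w j i c ->
  gfun A k w j i c =
    (reserve (lvl_i A k w j i c) (sat A w j i) - (lvl_i A k w j i c)%:R^-1)%R.
Proof. by move=> lt_sat; rewrite /gfun leqNgt lt_sat /reserve mulrBl mul1r. Qed.

Lemma eager_active j c : eager_state A k w f j c ->
  [exists i in Nc A c, sat A w j i < lvl_i A k w j i c].
Proof.
case=> _ [quota_le lt_quota]; apply: contraTT lt_quota => /exists_inPn inactive.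
rewrite -leNgt (eq_bigr (f j)) // => i /inactive; rewrite -leqNgt => /gfun_inactive ->.
exact: subr0.
Qed.

End Levels.

Section NormalRun.
Variables (n : nat) (C : finType) (A : 'I_n -> {set C}) (k : nat).
Variables (w : nat -> C) (f : nat -> 'I_n -> rat).
Hypotheses (n_gt0 : 0 < n) (run : PJR_exact_run A k w f).

Lemma run_f_ge0 t i : t <= k -> (0 <= f t i)%R.
Proof.
case: run => f0 step; case: t => [|t] le_tk; first by rewrite f0.
by have [_ /(_ i) []] := step t.+1 le_tk.
Qed.

Variable j : nat.
Hypothesis lt_jk : j < k.
Hypothesis normal_upto : forall t, 1 <= t <= j -> normal_iteration A k w f t.

Lemma reserve_le_f t i c l : t <= j -> c \in A i -> c \notin Wset w t ->
  sat A w t i < l -> l <= dbound A k (Wset w t) c l ->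
  (reserve l (sat A w t i) <= f t i)%R.
Proof.
case: run => f0 step.
elim: t i c l => [|t IH] i c l le_tj cA cW lt_sat_l le_l_dbound.
  by rewrite f0 reserve_le1 // (leq_ltn_trans _ lt_sat_l).
have [_ _ f_notin _ _] := step t.+1 (ltnW (leq_ltn_trans le_tj lt_jk)).
have cWt : c \notin Wset w t by apply: contra cW; apply/subsetP/subset_Wset.
have le_l_dbound_t : l <= dbound A k (Wset w t) c l.
  exact: leq_trans le_l_dbound (subset_dbound _ _ _ _ (subset_Wset _ (leqnSn t))).
have [iN|iNn] := boolP (i \in Nc A (w t.+1)); last first.
  have wA : w t.+1 \notin A i by rewrite inE in iNn.
  rewrite f_notin // satS_notin //; rewrite satS_notin // in lt_sat_l.
  exact: IH (ltnW le_tj) cA cWt lt_sat_l le_l_dbound_t.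
have [_ reserve_le] := @normal_upto t.+1 le_tj.
have le_l_lvl : l <= lvl_i A k w t i (w t.+1).
  apply: leq_trans (le_dlevel n_gt0 le_l_dbound_t) _; apply: lvl_le_lvl_i cA cWt _.
  by apply: contraNneq cW => ->; rewrite WsetS setU11.
have lt_sat : sat A w t i < lvl_i A k w t i (w t.+1).
  exact: leq_ltn_trans (leq_sat _ _ _ (leqnSn t)) (leq_trans lt_sat_l le_l_lvl).
apply: le_trans (reserve_le i iN lt_sat).
exact: reserve_homo (leq_ltn_trans _ lt_sat_l) le_l_lvl.
Qed.

Lemma max_level_normal cs : cs \notin Wset w j ->
  (forall c, c \notin Wset w j -> lvl A k w j c <= lvl A k w j cs) ->
  0 < lvl A k w j cs -> normal_state A k w f j cs.
Proof.
set L := lvl A k w j cs => csW cs_max L_gt0.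
have lvl_i_le_L i c : lvl_i A k w j i c <= L by apply: lvl_i_le.
have reserve_L_le i : i \in Nc A cs -> sat A w j i < L ->
    (reserve L (sat A w j i) <= f j i)%R.
  rewrite inE => csA lt_sat; apply: (reserve_le_f (c := cs)) => //.
  exact: dlevel_le_dbound.
split=> [i iN lt_sat|].
  apply: le_trans (reserve_L_le i iN (leq_trans lt_sat (lvl_i_le_L i cs))).
  exact: reserve_homo (leq_ltn_trans _ lt_sat) (lvl_i_le_L i cs).
have term_ge i : i \in Nc A cs ->
    ((if (sat A w j i < L)%N then L%:R^-1 else 0) <= f j i - gfun A k w j i cs)%R.
  move=> iN; have [lt_sat|le_lvl_i] := ltnP (sat A w j i) (lvl_i A k w j i cs).
    rewrite gfun_active // ifT ?(leq_trans lt_sat) //.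
    apply: le_trans (invn_le_reserve_sub_gap lt_sat (lvl_i_le_L i cs)) _.
    by rewrite lerD2r reserve_L_le ?(leq_trans lt_sat).
  rewrite gfun_inactive // subr0; case: ifP => [lt_sat|_].
    exact: le_trans (invn_le_reserve lt_sat) (reserve_L_le i iN lt_sat).
  exact: run_f_ge0 (ltnW lt_jk).
apply: le_trans (ler_sum _ term_ge); rewrite -big_mkcondr /=.
rewrite (eq_bigl [in [set i | (cs \in A i) && (sat A w j i < L)]]) => [|i].
  rewrite sumr_const -[X in (_ <= X)%R]mulr_natr mulrC.
  exact: quota_le_ratio n_gt0 L_gt0 (dlevel_le_dbound A k (Wset w j) cs).
by rewrite !inE.
Qed.

End NormalRun.

Theorem mainTheorem6 (n : nat) (C : finType) (A : 'I_n -> {set C}) (k : nat)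
    (w : nat -> C) (f : nat -> 'I_n -> rat) :
  0 < n -> 0 < k -> k <= #|C| ->
  PJR_exact_run A k w f ->
  forall j : nat, j <= k - 1 ->
  (forall t : nat, 1 <= t <= j -> normal_iteration A k w f t) ->
  forall c1 : C, c1 \notin Wset w j -> eager_state A k w f j c1 ->
  exists c2 : C, c2 \notin Wset w j /\ normal_state A k w f j c2.
Proof.
move=> n_gt0 k_gt0 _ run j le_j_k1 normal_upto c1 c1W c1_eager.
have lt_jk : j < k by lia.
have [cs csW cs_max] := @arg_maxnP _ c1 (fun c => c \notin Wset w j) (lvl A k w j) c1W.
exists cs; split=> //; apply: (max_level_normal n_gt0 run lt_jk normal_upto csW cs_max).
have /exists_inP[i _ lt_sat] := eager_active c1_eager.
exact: leq_ltn_trans (leq0n _) (leq_trans lt_sat (lvl_i_le _ _ cs_max)).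
Qed.
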